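(* Fix $d \geq 2$. If $c > 3/2$, then with high probability $Y \sim Y_d(n, \frac{c\log n}{n})$ has no inclusion-minimal $(d-1)$-cocycle of support size $k$ over any field, for any $\log n \leq k \leq n/(3d)$.
   Context: $Y_d(n,p)$ is the random $d$-dimensional simplicial complex on $n$ vertices with complete $(d-1)$-skeleton in which each $d$-face is included independently with probability $p$. ''With high probability'' means with probability tending to $1$ as $n\to\infty$. For a field $R$, a $(d-1)$-cochain $\phi$ over $R$ assigns values in $R$ to the oriented $(d-1)$-faces of the full simplex; it is a cocycle of $Y$ if $\delta\phi(\sigma) = 0$ for every $d$-face $\sigma$ of $Y$ ($\delta$ the simplicial coboundary). A nonzero cocycle $\phi$ over $R$ is inclusion-minimal if no nonzero cocycle of $Y$ over $R$ is supported on a proper subset of $\mathrm{supp}(\phi)$; its support size is $|\mathrm{supp}(\phi)|$. *)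

From HB Require Import structures.
From mathcomp Require Import all_boot all_order all_algebra.
From mathcomp Require Import all_classical all_reals all_analysis.
Set Implicit Arguments. Unset Strict Implicit. Unset Printing Implicit Defensive.
Import Order.TTheory GRing.Theory Num.Theory.
Local Open Scope ring_scope.

(* Vertices are 'I_n; a face is a subset of 'I_n.  A j-face has j+1 vertices. *)

Definition dfaces (n d : nat) : {set {set 'I_n}} := [set s : {set 'I_n} | #|s| == d.+1].

(* Sign of vertex v inside the face s (vertices ordered increasingly):
   the position of v in s is #|{u in s | u < v}|. *)
Definition pos_in (n : nat) (s : {set 'I_n}) (v : 'I_n) : nat :=
  #|[set u in s | (u < v)%N]|.

(* A (d-1)-cochain over F: value on each (d-1)-face (a set of d vertices),
   w.r.t. the increasing orientation; values on other sets are ignored. *)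
Definition cochain (F : fieldType) (n : nat) := {ffun {set 'I_n} -> F}.

(* Simplicial coboundary: (delta phi)(s) = sum_i (-1)^i phi(s \ v_i)
   with s = {v_0 < ... < v_d}. *)
Definition cobound (F : fieldType) (n : nat) (phi : cochain F n)
    (s : {set 'I_n}) : F :=
  \sum_(v in s) (-1) ^+ (pos_in s v) * phi (s :\ v).

Definition supp (F : fieldType) (n d : nat) (phi : cochain F n)
    : {set {set 'I_n}} :=
  [set f : {set 'I_n} | (#|f| == d) && (phi f != 0)].

(* phi is a (d-1)-cocycle of the d-complex Y (Y = set of its d-faces). *)
Definition is_cocycle (F : fieldType) (n : nat) (Y : {set {set 'I_n}})
    (phi : cochain F n) : Prop :=
  forall s, s \in Y -> cobound phi s = 0.

Definition minimal_cocycle (F : fieldType) (n d : nat) (Y : {set {set 'I_n}})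
    (phi : cochain F n) : Prop :=
  [/\ is_cocycle Y phi, supp d phi != finset.set0 &
      forall psi : cochain F n, is_cocycle Y psi -> supp d psi != finset.set0 ->
        ~ (supp d psi \proper supp d phi)].

(* Probability of an event (a property of Y) in Y_d(n,p): each d-face
   included independently with probability p. *)
Definition probY {R : realType} (n d : nat) (p : R)
    (E : {set {set 'I_n}} -> Prop) : R :=
  \sum_(Y : {set {set 'I_n}} | (Y \subset dfaces n d) && `[< E Y >])
     p ^+ #|Y| * (1 - p) ^+ (#|dfaces n d| - #|Y|).

Definition no_mid_minimal_cocycle {R : realType} (n d : nat)
    (Y : {set {set 'I_n}}) : Prop :=
  forall (F : fieldType) (phi : cochain F n),
    minimal_cocycle d Y phi ->
    ~ ((ln (n%:R : R) <= (#|supp d phi|)%:R) &&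
       ((#|supp d phi|)%:R <= (n%:R : R) / (3 * d)%:R)).

From mathcomp Require Import all_boot all_order all_algebra.
From mathcomp Require Import all_classical all_reals all_analysis.
From mathcomp.algebra_tactics Require Import ring lra.
From mathcomp Require Import fintype finset.
From mathcomp Require unstable.
Import numFieldNormedType.Exports.
Import Order.TTheory GRing.Theory Num.Theory.
Set Implicit Arguments. Unset Strict Implicit. Unset Printing Implicit Defensive.
Local Open Scope ring_scope.

(* Let phi be an inclusion-minimal cocycle with support S of size k.
   Minimality makes S connected in the graph on (d-1)-faces in which g is a
   neighbour of w when it is obtained from w by exchanging one vertex, and
   the cocycle condition excludes from Y every d-face f :|: [set v] with
   f \in S and v outside the vertices of S, since its coboundary is
   +-phi(f) <> 0.  There are at least k (n - k d) such faces, so a fixed S is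
   a candidate with probability at most (1 - p)^(k (n - k d)), which for
   c > 3/2 and k >= log n is at most n^-(d+2) x^k (1 - x)^|boundary S| with
   x = 1/(2dn).  Up to the factor n^-(d+2), this is the probability that S
   is the cluster of a fixed face in site percolation of density x, so the
   connected S through a fixed face contribute at most n^-(d+2) in total,
   and the binomial(n, d) <= n^d choices of that face leave a failure
   probability of at most 1/n. *)

Lemma ler_term_sum (R : numDomainType) (I : finType) (P : pred I) (F : I -> R) i :
  P i -> (forall j, P j -> 0 <= F j) -> F i <= \sum_(j | P j) F j.
Proof.
by move=> Pi F0; rewrite (bigD1 i) //= lerDl sumr_ge0 // => j /andP[/F0].
Qed.

Section BernoulliWeight.
Variables (R : comNzRingType) (V : finType) (x : R).

Definition bernoulli_weight (D T : {set V}) : R :=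
  x ^+ #|T| * (1 - x) ^+ (#|D| - #|T|).

Lemma prod_if_const (T : {set V}) (a : R) :
  \prod_i (if i \in T then a else 1) = a ^+ #|T|.
Proof. by rewrite -big_mkcond prodr_const. Qed.

Lemma sum_bernoulli_weight_between (D A B : {set V}) :
  A \subset D -> B \subset D -> [disjoint A & B] ->
  \sum_(T : {set V} | [&& T \subset D, A \subset T & [disjoint T & B]])
     bernoulli_weight D T = x ^+ #|A| * (1 - x) ^+ #|B|.
Proof.
move=> AD BD dAB.
(* Expanding \prod_i (F i + G i) gives one product per set T, equal to
   bernoulli_weight D T for the T of the sum and to 0 otherwise. *)
pose F i := if (i \in D) && (i \notin B) then x else 0.
pose G i := if i \in D then (if i \in A then 0 else 1 - x) else 1.
have prodFG : \prod_i (F i + G i) = x ^+ #|A| * (1 - x) ^+ #|B|.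
  rewrite -!prod_if_const -big_split /=; apply: eq_bigr => i _; rewrite /F /G.
  case: (boolP (i \in A)) => iA.
    by rewrite (subsetP AD _ iA) (disjointFr dAB iA) addr0 mulr1.
  case: (boolP (i \in B)) => iB; first by rewrite (subsetP BD _ iB) add0r mul1r.
  by case: (i \in D); rewrite /= ?add0r ?addr0 ?mul1r // addrC subrK.
have term (T : {set V}) : \prod_i (if i \in T then F i else G i) =
    if [&& T \subset D, A \subset T & [disjoint T & B]]
    then bernoulli_weight D T else 0.
  case: ifP => [/and3P[TD AT dTB] | bad].
    rewrite /bernoulli_weight -[in X in (_ - X)%N](setIidPr TD) -cardsD.
    rewrite -!prod_if_const -big_split /=; apply: eq_bigr => i _; rewrite /F /G inE.
    case: (boolP (i \in T)) => iT /=.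
      by rewrite (subsetP TD _ iT) (disjointFr dTB iT) mulr1.
    case: (i \in D); rewrite /= ?mulr1 //.
    by case: (boolP (i \in A)) => [/(subsetP AT)|]; rewrite ?(negPf iT) ?mul1r.
  suff [i Fi0] : exists i, (if i \in T then F i else G i) = 0.
    by rewrite (bigD1 i) //= Fi0 mul0r.
  move/negbT: bad.
  case: (boolP (T \subset D)) => [TD|/subsetPn[i iT iD] _]; last first.
    by exists i; rewrite iT /F (negPf iD).
  case: (boolP (A \subset T)) => [AT|/subsetPn[i iA iT] _]; last first.
    by exists i; rewrite (negPf iT) /G (subsetP AD _ iA) iA.
  rewrite -setI_eq0 => /set0Pn[i]; rewrite inE => /andP[iT iB].
  by exists i; rewrite iT /F iB andbF.
by rewrite -prodFG bigA_distr (eq_bigr _ (fun T _ => term T)) -big_mkcond.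
Qed.

Lemma sum_bernoulli_weight (D : {set V}) :
  \sum_(T : {set V} | T \subset D) bernoulli_weight D T = 1.
Proof.
have := @sum_bernoulli_weight_between D set0 set0 (sub0set _) (sub0set _).
rewrite cards0 !expr0 mulr1 => <-; last by rewrite -setI_eq0 set0I.
by apply: eq_bigl => T; rewrite sub0set -setI_eq0 setI0 eqxx !andbT.
Qed.

End BernoulliWeight.

Lemma bernoulli_weight_ge0 (R : numDomainType) (V : finType) (x : R) (D T : {set V}) :
  0 <= x <= 1 -> 0 <= bernoulli_weight x D T.
Proof. by case/andP=> x0 x1; rewrite mulr_ge0 ?exprn_ge0 ?subr_ge0. Qed.

Section ClusterWeight.
Variables (R : realFieldType) (V : finType) (e : rel V).

Definition edge_in (S : {set V}) : rel V := [rel a b | e a b && (b \in S)].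

Definition connected_from (v : V) (S : {set V}) : bool :=
  [forall u in S, connect (edge_in S) v u].

Definition out_boundary (S : {set V}) : {set V} :=
  [set u | (u \notin S) && [exists w in S, e w u]].

Lemma disjoint_out_boundary (S : {set V}) : [disjoint S & out_boundary S].
Proof. by rewrite -setI_eq0; apply/eqP/setP => u; rewrite !inE; case: (u \in S). Qed.

Lemma connected_from_sub (v : V) (S1 S2 T : {set V}) :
  v \in S2 -> connected_from v S1 -> S1 \subset T ->
  [disjoint T & out_boundary S2] -> S1 \subset S2.
Proof.
move=> vS2 /forall_inP conn1 S1T dT; apply/subsetP => u /conn1 /connectP[p].
elim: p v vS2 {conn1} => [|b p IH] a aS2 /=; first by move=> _ ->.
case/andP=> /andP[eab bS1] pth; apply: IH pth.
apply: contraFT (disjointFr dT (subsetP S1T _ bS1)) => bS2.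
by rewrite inE bS2; apply/exists_inP; exists a.
Qed.

(* The weight of S is the probability that S is the cluster of v in site
   percolation of density x; a random set determines the cluster of v
   (connected_from_sub), so these events are disjoint. *)
Lemma sum_cluster_weight_le1 (v : V) (x : R) : 0 <= x <= 1 ->
  \sum_(S : {set V} | (v \in S) && connected_from v S)
     x ^+ #|S| * (1 - x) ^+ #|out_boundary S| <= 1.
Proof.
move=> x01.
rewrite -[leRHS](sum_bernoulli_weight x [set: V]).
under eq_bigr => S _.
  rewrite -(@sum_bernoulli_weight_between _ _ x [set: V] S (out_boundary S))
    ?subsetT ?disjoint_out_boundary // big_mkcond /=.
  over.
under [leRHS]eq_bigl do rewrite subsetT.
rewrite exchange_big /=.
apply: ler_sum => T _; rewrite -big_mkcondr /=.
rewrite sumr_const -[leRHS]mulr1n ler_wpMn2l ?bernoulli_weight_ge0 //.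
apply/card_le1_eqP => S1 S2 /=.
move=> /andP[/andP[vS1 c1] /and3P[_ S1T d1]] /andP[/andP[vS2 c2] /and3P[_ S2T d2]].
by apply/eqP; rewrite eqEsubset (connected_from_sub vS1 c2 S2T d1)
  (connected_from_sub vS2 c1 S1T d2).
Qed.

End ClusterWeight.

Section FaceGraph.
Variables (n d : nat).
Notation face := {set 'I_n}.

Definition swaps (w : face) : {set face} :=
  [set (w :\ av.1) :|: [set av.2] | av in setX w [set: 'I_n]].

Definition face_adj : rel face := fun w g => g \in swaps w.

Lemma card_swaps (w : face) : (#|swaps w| <= #|w| * n)%N.
Proof. by rewrite (leq_trans (leq_imset_card _ _)) // cardsX cardsT card_ord. Qed.

Lemma card_out_boundary (S : {set face}) : {in S, forall f : face, #|f| = d} ->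
  (#|out_boundary face_adj S| <= #|S| * (d * n))%N.
Proof.
move=> Sd; have sub : out_boundary face_adj S \subset \bigcup_(w in S) swaps w.
  apply/subsetP => u; rewrite inE => /andP[_ /exists_inP[w wS ewu]].
  by apply/bigcupP; exists w.
rewrite (leq_trans (subset_leq_card sub)) //.
rewrite (leq_trans (unstable.card_big_setU _ _ _)) //.
rewrite -sum_nat_const leq_sum // => w wS.
by rewrite -(Sd w wS) card_swaps.
Qed.

Lemma face_adj_setD1 (s : face) (u0 u : 'I_n) :
  u0 \in s -> u \in s -> u != u0 -> face_adj (s :\ u0) (s :\ u).
Proof.
move=> u0s us uu0; apply/imsetP; exists (u, u0); first by rewrite !inE uu0 us.
apply/setP => x /=; rewrite !inE.
by case: (eqVneq x u0) => [->|] /=; rewrite ?orbF // eq_sym uu0 u0s.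
Qed.

Definition vertices (S : {set face}) : {set 'I_n} := \bigcup_(f in S) f.

Lemma mem_vertices (S : {set face}) f x : f \in S -> x \in f -> x \in vertices S.
Proof. by move=> fS xf; apply/bigcupP; exists f. Qed.

Definition outer_cofaces (S : {set face}) : {set face} :=
  [set fv.1 :|: [set fv.2] | fv in setX S (~: vertices S)].

Lemma outer_cofaces_sub (S : {set face}) : {in S, forall f : face, #|f| = d} ->
  outer_cofaces S \subset dfaces n d.
Proof.
move=> Sd; apply/subsetP => s /imsetP[[f v]]; rewrite !inE /= => /andP[fS vS] ->.
have vf : v \notin f by apply: contra vS => /(mem_vertices fS).
by rewrite setUC cardsU1 vf Sd.
Qed.

Lemma card_outer_cofaces (S : {set face}) : {in S, forall f : face, #|f| = d} ->
  (#|S| * (n - #|S| * d) <= #|outer_cofaces S|)%N.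
Proof.
move=> Sd; have trace f v : f \in S -> v \notin vertices S ->
    (f :|: [set v]) :&: vertices S = f.
  move=> fS vS; apply/setP => x; rewrite !inE.
  case: (boolP (x \in f)) => [/(mem_vertices fS) -> // | _].
  by case: eqP => // ->; rewrite (negPf vS).
rewrite card_in_imset; last first.
  move=> [f v] [f' v']; rewrite !inE /= => /andP[fS vS] /andP[f'S v'S] eq_fv.
  have ff' : f = f' by rewrite -(trace f v) // eq_fv trace.
  subst f'; congr pair; have : v \in f :|: [set v'] by rewrite -eq_fv !inE eqxx orbT.
  by rewrite !inE => /orP[/(mem_vertices fS) vf | /eqP //]; rewrite vf in vS.
rewrite cardsX leq_mul2l [#|~: _|]cardsCs setCK card_ord leq_sub2l ?orbT //.
rewrite (leq_trans (unstable.card_big_setU _ _ _)) // -sum_nat_const.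
by apply: leq_sum => f fS; rewrite Sd.
Qed.

End FaceGraph.

Section Cocycles.
Variables (F : fieldType) (n d : nat) (Y : {set {set 'I_n}}) (phi : cochain F n).
Notation face := {set 'I_n}.

Lemma setD1_in_supp (s : face) (u : 'I_n) : #|s| = d.+1 -> u \in s ->
  (s :\ u \in supp d phi) = (phi (s :\ u) != 0).
Proof.
move=> cs us; have : #|s :\ u| = d by move: (cardsD1 u s); rewrite us cs add1n => -[].
by rewrite inE => ->; rewrite eqxx.
Qed.

Lemma cocycle_disjoint_outer_cofaces :
  is_cocycle Y phi -> [disjoint Y & outer_cofaces (supp d phi)].
Proof.
move=> cyc; rewrite -setI_eq0; apply/eqP/setP => s; rewrite !inE.
apply/negP => /andP[sY /imsetP[[f v]]]; rewrite in_setX in_setC /= => /andP[fS vS] sE.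
have vf : v \notin f by apply: contra vS => /(mem_vertices fS).
have [fd phif0] : #|f| = d /\ phi f != 0 by move: fS; rewrite inE => /andP[/eqP].
have cs : #|s| = d.+1 by rewrite sE setUC cardsU1 vf fd.
have sv : s :\ v = f.
  by rewrite sE setDUl setDv setU0; apply/setDidPl; rewrite disjoint_sym disjoints1.
have vs : v \in s by rewrite sE !inE eqxx orbT.
have := cyc s sY; rewrite /cobound (bigD1 v) //= sv big1 ?addr0.
  by move/eqP; rewrite mulf_eq0 signr_eq0 (negPf phif0).
move=> u /andP[us uv]; apply/eqP; rewrite mulf_eq0; apply/orP; right.
apply/eqP; apply: contraNeq vS; rewrite -(setD1_in_supp cs us) => /mem_vertices.
by apply; rewrite !inE eq_sym uv.
Qed.

Definition restr_cochain (S : {set face}) : cochain F n :=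
  [ffun g => if g \in S then phi g else 0].

Lemma supp_restr_cochain (S : {set face}) :
  S \subset supp d phi -> supp d (restr_cochain S) = S.
Proof.
move=> Ssupp; apply/setP => g; rewrite !inE ffunE.
case: (boolP (g \in S)) => [gS | _]; last by rewrite eqxx andbF.
by move: (subsetP Ssupp g gS); rewrite inE.
Qed.

(* A face s of Y whose boundary meets S has all its support facets in S, so
   the coboundary of the restriction at s is that of phi. *)
Lemma restr_cochain_cocycle (S : {set face}) :
  Y \subset dfaces n d -> is_cocycle Y phi ->
  {in S & supp d phi, forall g h, face_adj g h -> h \in S} ->
  is_cocycle Y (restr_cochain S).
Proof.
move=> Yd cyc closedS s sY.
have cs : #|s| = d.+1 by have := subsetP Yd s sY; rewrite inE => /eqP.
have [/exists_inP[u0 u0s Su0] | noS] := boolP [exists u in s, s :\ u \in S].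
  rewrite -[RHS](cyc s sY); apply: eq_bigr => u us; rewrite ffunE.
  case: ifP => // /negbT Su; have uu0 : u != u0 by apply: contraNneq Su => ->.
  congr (_ * _); apply/esym/eqP; apply: contraNT Su.
  rewrite -(setD1_in_supp cs us) => Ssu.
  exact: (closedS _ _ Su0 Ssu (face_adj_setD1 u0s us uu0)).
apply: big1 => u us; rewrite ffunE; case: ifP => [Su | _]; last by rewrite mulr0.
by case/negP: noS; apply/exists_inP; exists u.
Qed.

Lemma minimal_cocycle_connected (f0 : face) :
  Y \subset dfaces n d -> minimal_cocycle d Y phi -> f0 \in supp d phi ->
  connected_from (@face_adj n) f0 (supp d phi).
Proof.
move=> Yd [cyc _ minl] f0S; set S := supp d phi.
set C := [set g in S | connect (edge_in (@face_adj n) S) f0 g].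
have CS : C \subset S by apply/subsetP => g; rewrite inE => /andP[].
have closedC : {in C & S, forall g h, face_adj g h -> h \in C}.
  move=> g h; rewrite inE => /andP[_ f0g] hS gh; rewrite inE hS.
  by apply: connect_trans f0g (connect1 _); apply/andP.
have := minl _ (restr_cochain_cocycle Yd cyc closedC); rewrite supp_restr_cochain //.
move=> notproper; apply/forall_inP => g gS; apply/idPn => f0g; apply: notproper.
  by apply/set0Pn; exists f0; rewrite inE f0S connect0.
by rewrite properE CS; apply/subsetPn; exists g; rewrite // inE gS.
Qed.

End Cocycles.

Lemma bernoulli_ineq (R : realFieldType) (x : R) (m : nat) :
  0 <= x <= 1 -> 1 - m%:R * x <= (1 - x) ^+ m.
Proof.
case/andP => x0 x1; elim: m => [|m IH]; first by rewrite mul0r subr0 expr0.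
rewrite exprS (le_trans _ (ler_wpM2l _ IH)) ?subr_ge0 //.
have m0 : 0 <= m%:R :> R by [].
rewrite -natr1; nra.
Qed.

Lemma exprn_onem_le_expR (R : realType) (p : R) (m B : nat) :
  0 <= p <= 1 -> (m <= B)%N -> (1 - p) ^+ B <= expR (- (p * m%:R)).
Proof.
case/andP=> p0 p1 mB; rewrite -mulNr expRM_natr.
rewrite (le_trans (ler_wiXn2l _ _ mB)) ?subr_ge0 ?gerBl //.
apply: lerXn2r; rewrite ?nnegrE ?subr_ge0 ?expR_ge0 //.
exact: expR_ge1Dx.
Qed.

Lemma half_exprn_le_exprn_onem (R : realFieldType) (x : R) (m k N : nat) :
  0 <= x <= 1 -> m%:R * x <= 2^-1 -> (N <= k * m)%N ->
  (x / 2) ^+ k <= x ^+ k * (1 - x) ^+ N.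
Proof.
move=> /andP[x0 x1] mx Nkm; have x1' : 0 <= 1 - x by rewrite subr_ge0.
rewrite (le_trans _ (ler_wpM2l (exprn_ge0 _ x0) (ler_wiXn2l x1' _ Nkm))) ?gerBl //.
rewrite exprMn mulnC exprM; apply: ler_wpM2l; first exact: exprn_ge0.
apply: lerXn2r; rewrite ?nnegrE ?invr_ge0 ?exprn_ge0 //.
by rewrite (le_trans _ (bernoulli_ineq m (introT andP (conj x0 x1)))) //; lra.
Qed.

Lemma cluster_exponent_ineq (R : realFieldType) (n d k L A c : R) :
  0 < n -> 0 <= d -> 0 <= c -> 0 <= L -> L <= k -> 3 * (k * d) <= n ->
  d + 2 <= (2 * c / 3 - 1) * L - A ->
  (d + 2) * L + k * (A + L) <= c * L / n * (k * (n - k * d)).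
Proof.
move=> n0 d0 c0 L0 Lk kdn H.
have k0 : 0 <= k by lra.
have twothirds : 2 / 3 * (c * L * k) <= c * L / n * (k * (n - k * d)).
  have -> : c * L / n * (k * (n - k * d)) = c * L * k * ((n - k * d) / n).
    by field; rewrite lt0r_neq0.
  rewrite [leRHS]mulrC ler_wpM2r ?mulr_ge0 //.
  by rewrite ler_pdivlMr //; lra.
apply: le_trans twothirds.
have : 0 <= k * ((2 * c / 3 - 1) * L - A - (d + 2)) by rewrite mulr_ge0 ?subr_ge0.
have : 0 <= (k - L) * (d + 2) by rewrite mulr_ge0 ?subr_ge0 ?addr_ge0.
lra.
Qed.

Lemma avoid_prob_le_cluster_weight (R : realType) (n d k B N : nat) (c : R) :
  (0 < d)%N -> (0 < n)%N -> 0 <= c -> c * ln (n%:R : R) / n%:R <= 1 ->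
  d%:R + 2 <= (2 * c / 3 - 1) * ln (n%:R : R) - ln (4 * d%:R) ->
  ln (n%:R : R) <= k%:R -> (k%:R : R) <= n%:R / (3 * d)%:R ->
  (k * (n - k * d) <= B)%N -> (N <= k * (d * n))%N ->
  (1 - c * ln (n%:R : R) / n%:R) ^+ B <=
    n%:R^-1 ^+ (d + 2) * ((2 * d * n)%:R^-1 ^+ k * (1 - (2 * d * n)%:R^-1) ^+ N).
Proof.
move=> d0 n0 c0 p1 H Lk kn kB Nk.
set L := ln (n%:R : R); set p := c * L / n%:R; set x : R := (2 * d * n)%:R^-1.
set A := ln (4 * d%:R : R).
have n0' : (0 : R) < n%:R by rewrite ltr0n.
have d0' : (0 : R) < d%:R by rewrite ltr0n.
have L0 : 0 <= L by rewrite ln_ge0 // ler1n.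
have p0 : 0 <= p by rewrite /p !mulr_ge0 // invr_ge0 ltW.
have kdn : 3 * (k%:R * d%:R) <= n%:R :> R.
  by move: kn; rewrite natrM ler_pdivlMr ?mulr_gt0 //; lra.
have kdn_nat : (k * d <= n)%N by rewrite -(ler_nat R) natrM; lra.
have x01 : 0 <= x <= 1.
  by rewrite invr_ge0 ler0n invf_le1 ?ltr0n ?ler1n ?muln_gt0 ?d0 ?n0.
have dnx : (d * n)%:R * x = 2^-1.
  by rewrite /x !natrM; field; rewrite !lt0r_neq0.
apply: le_trans (exprn_onem_le_expR (introT andP (conj p0 p1)) kB) _.
apply: le_trans (ler_wpM2l _ (half_exprn_le_exprn_onem x01 _ Nk)); last first.
- by rewrite dnx.
- by rewrite exprn_ge0 // invr_ge0 ltW.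
have -> : n%:R^-1 = expR (- L) by rewrite expRN lnK ?posrE.
have -> : x / 2 = expR (- (A + L)).
  by rewrite expRN -lnM ?posrE ?mulr_gt0 // lnK ?posrE ?mulr_gt0 // /x !natrM; field;
     rewrite !lt0r_neq0.
rewrite -!expRM_natr -expRD ler_expR natrM natrB // natrM natrD.
have := cluster_exponent_ineq n0' (ltW d0') c0 L0 Lk kdn H.
rewrite -/A -/p; lra.
Qed.

Section UnionBound.
Variables (R : realType) (n d : nat).
Notation face := {set 'I_n}.

Definition mid_cluster (f0 : face) (S : {set face}) : bool :=
  [&& f0 \in S, S \subset [set f : face | #|f| == d],
      connected_from (@face_adj n) f0 S,
      ln (n%:R : R) <= #|S|%:R & (#|S|%:R : R) <= n%:R / (3 * d)%:R].

Lemma mid_cluster_faces (f0 : face) (S : {set face}) :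
  mid_cluster f0 S -> {in S, forall f : face, #|f| = d}.
Proof. by case/and5P=> _ /subsetP Sd _ _ _ f /Sd; rewrite inE => /eqP. Qed.

Lemma no_mid_minimal_cocycle_of_hits (Y : {set face}) : Y \subset dfaces n d ->
  (forall f0 S, mid_cluster f0 S -> ~~ [disjoint Y & outer_cofaces S]) ->
  no_mid_minimal_cocycle (R := R) d Y.
Proof.
move=> Yd hits F phi mc size_ok; case: (mc) => cyc /set0Pn[f0 f0S] _.
suff /hits : mid_cluster f0 (supp d phi).
  by rewrite (cocycle_disjoint_outer_cofaces d cyc).
case/andP: size_ok => lo hi; apply/and5P; split => //.
  by apply/subsetP => g; rewrite !inE => /andP[-> _].
exact: (minimal_cocycle_connected Yd mc f0S).
Qed.

Lemma sum_bad_le_sum_hits (w : {set face} -> R) : (forall Y, 0 <= w Y) ->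
  \sum_(Y : {set face} | (Y \subset dfaces n d) &&
                         ~~ `[< no_mid_minimal_cocycle (R := R) d Y >]) w Y <=
  \sum_(f0 : face | #|f0| == d) \sum_(S : {set face} | mid_cluster f0 S)
     \sum_(Y : {set face} | (Y \subset dfaces n d) &&
                            [disjoint Y & outer_cofaces S]) w Y.
Proof.
move=> w0; under [leRHS]eq_bigr do under eq_bigr do rewrite big_mkcondr /=.
under [leRHS]eq_bigr do rewrite exchange_big /=.
rewrite exchange_big /= big_mkcondr /=; apply: ler_sum => Y Yd.
have sum0 (f0 : face) : 0 <= \sum_(S | mid_cluster f0 S)
    (if [disjoint Y & outer_cofaces S] then w Y else 0).
  by apply: sumr_ge0 => S _; case: ifP.
case: ifP => [/asboolPn bad | _]; last by apply: sumr_ge0.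
have [f0 [S [mid dis]]] :
    exists f0 S, mid_cluster f0 S /\ [disjoint Y & outer_cofaces S].
  apply: contra_notP bad => none.
  apply: no_mid_minimal_cocycle_of_hits => // f0 S mid.
  by apply/negP => dis; apply: none; exists f0, S.
have f0d : #|f0| == d by case/and5P: mid => /[swap] /subsetP /[apply]; rewrite inE.
rewrite (le_trans _ (ler_term_sum f0d (fun f _ => sum0 f))) //.
by rewrite (le_trans _ (ler_term_sum mid _)) ?dis // => S' _; case: ifP.
Qed.

End UnionBound.

Lemma one_sub_probY (R : realType) (n d : nat) (p : R)
    (E : {set {set 'I_n}} -> Prop) :
  1 - @probY R n d p E =
    \sum_(Y : {set {set 'I_n}} | (Y \subset dfaces n d) && ~~ `[< E Y >])
       bernoulli_weight p (dfaces n d) Y.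
Proof.
rewrite -(sum_bernoulli_weight p (dfaces n d)) (bigID (fun Y => `[< E Y >])) /=.
by rewrite /probY addrC addrK.
Qed.

Lemma probY_le1 (R : realType) (n d : nat) (p : R) (E : {set {set 'I_n}} -> Prop) :
  0 <= p <= 1 -> @probY R n d p E <= 1.
Proof.
move=> p01; rewrite -subr_ge0 one_sub_probY sumr_ge0 // => Y _.
exact: bernoulli_weight_ge0.
Qed.

Lemma one_sub_probY_le (R : realType) (n d : nat) (c : R) :
  (0 < d)%N -> (0 < n)%N -> 0 <= c -> c * ln (n%:R : R) / n%:R <= 1 ->
  d%:R + 2 <= (2 * c / 3 - 1) * ln (n%:R : R) - ln (4 * d%:R) ->
  1 - @probY R n d (c * ln (n%:R : R) / n%:R) (@no_mid_minimal_cocycle R n d) <=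
    'C(n, d)%:R * n%:R^-1 ^+ (d + 2).
Proof.
move=> d0 n0 c0 p1 H; set p := c * _ / _; set K : R := n%:R^-1 ^+ (d + 2).
set x : R := (2 * d * n)%:R^-1.
have p01 : 0 <= p <= 1 by rewrite p1 !mulr_ge0 ?ln_ge0 ?ler1n ?invr_ge0.
have x01 : 0 <= x <= 1.
  by rewrite invr_ge0 ler0n invf_le1 ?ltr0n ?ler1n ?muln_gt0 ?d0 ?n0.
rewrite one_sub_probY.
rewrite (le_trans (sum_bad_le_sum_hits d (fun Y => bernoulli_weight_ge0 _ Y p01))) //.
apply: (@le_trans _ _ (\sum_(f0 : {set 'I_n} | #|f0| == d) K)); last first.
  by rewrite sumr_const -cardsE card_draws card_ord mulr_natl.
apply: ler_sum => f0 _.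
apply: (@le_trans _ _ (\sum_(S | mid_cluster R d f0 S)
                         K * (x ^+ #|S| * (1 - x) ^+ #|out_boundary (@face_adj n) S|))).
  apply: ler_sum => S mid; have Sd := mid_cluster_faces mid.
  rewrite (eq_bigl (fun Y : {set {set 'I_n}} =>
    [&& Y \subset dfaces n d, set0 \subset Y & [disjoint Y & outer_cofaces S]]));
    last first.
    by move=> Y; rewrite sub0set.
  rewrite sum_bernoulli_weight_between ?sub0set ?outer_cofaces_sub //; last first.
    by rewrite -setI_eq0 set0I.
  rewrite cards0 expr0 mul1r; case/and5P: mid => _ _ _ lo hi.
  by apply: avoid_prob_le_cluster_weight;
    rewrite ?card_outer_cofaces ?card_out_boundary.
rewrite -mulr_sumr ler_piMr //; first by rewrite exprn_ge0 // invr_ge0.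
rewrite (le_trans _ (sum_cluster_weight_le1 (@face_adj n) f0 x01)) //.
rewrite [leRHS]big_mkcond [leLHS]big_mkcond ler_sum // => S _.
case: ifP => [/and5P[-> _ -> _ _] // | _]; case: ifP => // _.
by case/andP: x01 => x0 x1; rewrite mulr_ge0 ?exprn_ge0 ?subr_ge0.
Qed.

Lemma bin_le_expn (n m : nat) : ('C(n, m) <= n ^ m)%N.
Proof.
rewrite (leq_trans (leq_pmulr _ (fact_gt0 m))) // bin_ffact.
elim: m => [|m IH]; first by rewrite ffactn0.
by rewrite ffactnSr expnSr leq_mul // leq_subr.
Qed.

Lemma bin_mul_expr_inv_le (R : realFieldType) (n d : nat) : (0 < n)%N ->
  ('C(n, d)%:R : R) * n%:R^-1 ^+ (d + 2) <= n%:R^-1.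
Proof.
move=> n0; have n0' : (0 : R) < n%:R by rewrite ltr0n.
have bin : ('C(n, d)%:R : R) <= n%:R ^+ d by rewrite -natrX ler_nat bin_le_expn.
have inv0 : (0 : R) <= n%:R^-1 by rewrite invr_ge0 ltW.
apply: le_trans (ler_wpM2r (exprn_ge0 _ inv0) bin) _.
rewrite exprD mulrA -exprMn mulfV ?lt0r_neq0 // expr1n mul1r expr2.
by rewrite ler_piMr // invf_le1 // ler1n.
Qed.

Local Open Scope classical_set_scope.
Local Open Scope ring_scope.

Lemma near_scaled_ln_div_le1 (R : realType) (c : R) : 0 < c ->
  \forall n \near \oo, c * ln (n%:R : R) / n%:R <= 1.
Proof.
move=> c0; near=> n.
have n0 : (0 : R) < n%:R by near: n; exists 1%N => // n /=; rewrite ltr0n.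
have hn : 2 * c * ln (2 * c) < n%:R by near: n; exact: nbhs_infty_gtr.
rewrite ler_pdivrMr // mul1r.
have : ln (n%:R / (2 * c)) < n%:R / (2 * c) by rewrite ln_sublinear ?divr_gt0 ?mulr_gt0.
rewrite lnM ?posrE ?invr_gt0 ?mulr_gt0 // lnV ?posrE ?mulr_gt0 // => h.
have : c * ln n%:R < c * (n%:R / (2 * c) + ln (2 * c)) by rewrite ltr_pM2l //; lra.
have -> : c * (n%:R / (2 * c) + ln (2 * c)) = n%:R / 2 + c * ln (2 * c).
  by field; rewrite lt0r_neq0.
lra.
Unshelve. all: by end_near.
Qed.

Lemma near_ln_ge (R : realType) (M : R) : \forall n \near \oo, M <= ln (n%:R : R).
Proof.
near=> n; have hn : expR M < n%:R by near: n; exact: nbhs_infty_gtr.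
have n0 : 0 < n%:R :> R := lt_trans (expR_gt0 M) hn.
by rewrite -[M]expRK ler_ln ?posrE ?expR_gt0 // ltW.
Unshelve. all: by end_near.
Qed.

Theorem lemma12 (R : realType) (d : nat) (c : R) :
  (2 <= d)%N -> 3 / 2 < c ->
  ((fun n : nat =>
     @probY R n d (c * ln (n%:R : R) / n%:R)
       (@no_mid_minimal_cocycle R n d)) : R^nat) @ \oo --> (1 : R).
Proof.
move=> d2 c32; have d0 : (0 < d)%N by apply: leq_trans d2.
have c0 : 0 < c by lra.
have a0 : 0 < 2 * c / 3 - 1 by lra.
apply/cvgrPdist_le => eps eps0; near=> n.
have n0 : (0 < n)%N by near: n; exists 1%N.
have p1 : c * ln (n%:R : R) / n%:R <= 1 by near: n; exact: near_scaled_ln_div_le1.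
have margin : d%:R + 2 <= (2 * c / 3 - 1) * ln (n%:R : R) - ln (4 * d%:R).
  have : (d%:R + 2 + ln (4 * d%:R)) / (2 * c / 3 - 1) <= ln (n%:R : R).
    by near: n; exact: near_ln_ge.
  by rewrite ler_pdivrMr // => ?; lra.
have n_eps : n%:R^-1 <= eps.
  rewrite -(invrK eps) lef_pV2 ?posrE ?invr_gt0 ?ltr0n // ltW //.
  by near: n; exact: nbhs_infty_gtr.
have p01 : 0 <= c * ln (n%:R : R) / n%:R <= 1.
  by rewrite p1 !mulr_ge0 ?ln_ge0 ?ler1n ?invr_ge0 ?(ltW c0).
have lo := one_sub_probY_le d0 n0 (ltW c0) p1 margin.
have := bin_mul_expr_inv_le R d n0.
rewrite ger0_norm ?subr_ge0 ?probY_le1 //; lra.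
Unshelve. all: by end_near.
Qed.
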